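(* The function $H_2$ is given by the formula $$ H_2(z)=\frac{1}{2}\frac{(1-\vert z\vert^2)^4}{\vert1-z\vert^2} +\frac{1}{2}\frac{(1-\vert z\vert^2)^5}{\vert1-z\vert^4} -\frac{1}{4}\frac{(1-\vert z\vert^2)^4}{\vert1-z\vert^4} +\frac{1}{6}\frac{(1-\vert z\vert^2)^6}{\vert1-z\vert^6}, \quad z\in\mathbb{D}. $$
   Context: Let $\mathbb{D}$ be the unit disc, $\mathbb{T}=\partial\mathbb{D}$ the unit circle, $\Delta=\partial^2/\partial z\partial\bar z$, and for $\gamma>-1$ let $w_\gamma(z)=(1-\lvert z\rvert^2)^\gamma$, $z\in\mathbb{D}$. For a smooth function $u$ in $\mathbb{D}$ write $u_r(e^{i\theta})=u(re^{i\theta})$ for $0\le r<1$. We say $u=f_0$ on $\mathbb{T}$ (with $f_0\in\mathcal{D}'(\mathbb{T})$) if $\lim_{r\to1}u_r=f_0$ in $\mathcal{D}'(\mathbb{T})$, and the inward normal derivative is $\partial_n u=\lim_{r\to1}(u_r-f_0)/(1-r)$ in $\mathcal{D}'(\mathbb{T})$ when the limit exists. The Poisson kernel $H_\gamma$ is the (unique) solution, in this distributional sense, of $\Delta w_\gamma^{-1}\Delta H_\gamma=0$ in $\mathbb{D}$, $H_\gamma=0$ on $\mathbb{T}$, $\partial_n H_\gamma=\delta_1$ on $\mathbb{T}$, where $\delta_1$ is the unit Dirac mass at $1\in\mathbb{T}$. Here $\gamma=2$. *)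

From Stdlib Require Import Reals List.
From Coquelicot Require Import Coquelicot.
Open Scope R_scope.

(* Points of the plane are pairs (x,y), z = x + i y. *)
Definition in_disc (x y : R) : Prop := x ^ 2 + y ^ 2 < 1.

(* first-order partial derivative: true = d/dx, false = d/dy *)
Definition partial (b : bool) (f : R -> R -> R) : R -> R -> R :=
  if b then fun x y => Derive (fun t => f t y) x
       else fun x y => Derive (fun t => f x t) y.

Definition ex_partial (b : bool) (f : R -> R -> R) (x y : R) : Prop :=
  if b then ex_derive (fun t => f t y) x
       else ex_derive (fun t => f x t) y.

(* iterated partial derivative; the head of the list is applied last *)
Fixpoint dpartials (l : list bool) (f : R -> R -> R) : R -> R -> R :=
  match l with
  | nil => f
  | b :: l' => partial b (dpartials l' f)
  end.

Definition smooth_on_disc (f : R -> R -> R) : Prop :=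
  forall l : list bool,
    (forall x y, in_disc x y -> forall b, ex_partial b (dpartials l f) x y) /\
    (forall x y, in_disc x y -> continuity_2d_pt (dpartials l f) x y).

(* Delta = d^2 / dz dzbar = (1/4)(d_xx + d_yy) *)
Definition Delta (f : R -> R -> R) : R -> R -> R :=
  fun x y => / 4 * (dpartials (true :: true :: nil) f x y
                    + dpartials (false :: false :: nil) f x y).

Definition weight (gamma : nat) (x y : R) : R := (1 - (x ^ 2 + y ^ 2)) ^ gamma.

(* test functions on T, as smooth 2*PI-periodic functions of theta *)
Definition test_fun (phi : R -> R) : Prop :=
  (forall t, phi (t + 2 * PI) = phi t) /\ (forall n t, ex_derive_n phi n t).

(* a function g on T paired with a test function, with the normalized
   arc-length measure d theta / (2 pi) *)
Definition pair_T (g : R -> R) (phi : R -> R) : R :=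
  / (2 * PI) * RInt (fun t => g t * phi t) 0 (2 * PI).

Definition restr (u : R -> R -> R) (r : R) : R -> R :=
  fun t => u (r * cos t) (r * sin t).

(* u = 0 on T in the distributional sense: u_r -> 0 in D'(T) as r -> 1 *)
Definition boundary_zero (u : R -> R -> R) : Prop :=
  forall phi, test_fun phi ->
    filterlim (fun r => pair_T (restr u r) phi) (at_left 1) (locally 0).

(* d_n u = delta_1 on T (given u = 0 on T):
   (u_r - 0)/(1 - r) -> delta_1 in D'(T); <delta_1, phi> = phi(theta = 0) *)
Definition normal_derivative_dirac1 (u : R -> R -> R) : Prop :=
  forall phi, test_fun phi ->
    filterlim (fun r => pair_T (fun t => (restr u r t - 0) / (1 - r)) phi)
      (at_left 1) (locally (phi 0)).

Definition is_poisson_kernel (gamma : nat) (u : R -> R -> R) : Prop :=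
  smooth_on_disc u /\
  (forall x y, in_disc x y ->
     Delta (fun a b => / weight gamma a b * Delta u a b) x y = 0) /\
  boundary_zero u /\
  normal_derivative_dirac1 u.

Definition H2_formula (x y : R) : R :=
  let s := 1 - (x ^ 2 + y ^ 2) in
  let d := (1 - x) ^ 2 + y ^ 2 in
  / 2 * s ^ 4 / d + / 2 * s ^ 5 / d ^ 2 - / 4 * s ^ 4 / d ^ 2
  + / 6 * s ^ 6 / d ^ 3.

From Pilot Require Import Defs.
From Stdlib Require Import Reals Lra Nsatz.
From Coquelicot Require Import Coquelicot.
Open Scope R_scope.

(* In the disc, H2 and all its partial derivatives are rational functions of
   x, y, 1 / |1 - z|^2 and 1 / (1 - |z|^2), so smoothness and the equation are
   identities between such functions: w_2^-1 Delta H2 = 3/2 - 3 Re (1 - z)^-4,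
   which is harmonic.  On the circle of radius r, H2 / (1 - r) is bounded by a
   multiple of the Poisson kernel and its mean tends to 1, so it is an
   approximate identity and tends to delta_1; multiplying by 1 - r gives
   H2 = 0 on T. *)

Definition dist1_sq (x y : R) : R := (1 - x) ^ 2 + y ^ 2.

Definition one_minus_sq_norm (x y : R) : R := 1 - (x ^ 2 + y ^ 2).

Lemma dist1_sq_pos x y : in_disc x y -> 0 < dist1_sq x y.
Proof.
  unfold in_disc, dist1_sq; intros H.
  destruct (Req_dec y 0) as [->|Hy].
  - assert (x < 1) by nra; nra.
  - assert (0 < y ^ 2) by (apply pow2_gt_0; exact Hy); nra.
Qed.

Lemma one_minus_sq_norm_pos x y : in_disc x y -> 0 < one_minus_sq_norm x y.
Proof. unfold in_disc, one_minus_sq_norm; lra. Qed.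

Lemma locally_2d_in_disc x y : in_disc x y -> locally_2d in_disc x y.
Proof.
  intros H.
  assert (C : continuity_2d_pt one_minus_sq_norm x y).
  { unfold one_minus_sq_norm; simpl.
    repeat (apply continuity_2d_pt_minus || apply continuity_2d_pt_plus
            || apply continuity_2d_pt_mult || apply continuity_2d_pt_id1
            || apply continuity_2d_pt_id2 || apply continuity_2d_pt_const). }
  pose proof (one_minus_sq_norm_pos x y H) as Hp.
  destruct (C (mkposreal _ Hp)) as [d Hd].
  exists d; intros u v Hu Hv.
  specialize (Hd u v Hu Hv); apply Rabs_def2 in Hd.
  unfold in_disc, one_minus_sq_norm in *; simpl in Hd; lra.
Qed.

(* Expressions in x, y and the reciprocals 1 / |1 - z|^2 and 1 / (1 - |z|^2):
   smooth on the disc and closed under partial differentiation. *)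
Inductive expr : Type :=
| EC (c : R) | EX | EY | EInvD | EInvS
| EAdd (a b : expr) | EMul (a b : expr) | EPow (a : expr) (n : nat).

Fixpoint eval (e : expr) (x y : R) : R :=
  match e with
  | EC c => c
  | EX => x
  | EY => y
  | EInvD => / dist1_sq x y
  | EInvS => / one_minus_sq_norm x y
  | EAdd a b => eval a x y + eval b x y
  | EMul a b => eval a x y * eval b x y
  | EPow a n => eval a x y ^ n
  end.

Fixpoint deriv (b : bool) (e : expr) : expr :=
  match e with
  | EC _ => EC 0
  | EX => EC (if b then 1 else 0)
  | EY => EC (if b then 0 else 1)
  | EInvD => EMul (EC 2) (EMul (if b then EAdd (EC 1) (EMul (EC (-1)) EX)
                                    else EMul (EC (-1)) EY) (EPow EInvD 2))
  | EInvS => EMul (EC 2) (EMul (if b then EX else EY) (EPow EInvS 2))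
  | EAdd a c => EAdd (deriv b a) (deriv b c)
  | EMul a c => EAdd (EMul (deriv b a) c) (EMul a (deriv b c))
  | EPow a n => EMul (EMul (EC (INR n)) (EPow a (pred n))) (deriv b a)
  end.

Fixpoint derivs (l : list bool) (e : expr) : expr :=
  match l with
  | nil => e
  | b :: l' => deriv b (derivs l' e)
  end.

Lemma is_derive_eval (b : bool) e x y : in_disc x y ->
  is_derive (fun t => eval e (if b then t else x) (if b then y else t))
    (if b then x else y) (eval (deriv b e) x y).
Proof.
  intros H; pose proof (dist1_sq_pos x y H); pose proof (one_minus_sq_norm_pos x y H).
  unfold dist1_sq, one_minus_sq_norm in *.
  destruct b; induction e; simpl;
    first
      [ solve [unfold dist1_sq, one_minus_sq_norm; auto_derive; repeat split;
               try lra; field; lra]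
      | exact (is_derive_plus _ _ _ _ _ IHe1 IHe2)
      | apply (is_derive_mult _ _ _ _ _ IHe1 IHe2); intros; apply Rmult_comm
      | rewrite Rmult_assoc, (Rmult_comm (_ ^ _)), <- Rmult_assoc;
        exact (is_derive_pow _ _ _ _ IHe) ].
Qed.

Lemma continuity_2d_pt_eval e x y : in_disc x y -> continuity_2d_pt (eval e) x y.
Proof.
  intros H; pose proof (dist1_sq_pos x y H); pose proof (one_minus_sq_norm_pos x y H).
  induction e; simpl.
  - apply continuity_2d_pt_const.
  - apply continuity_2d_pt_id1.
  - apply continuity_2d_pt_id2.
  - apply (continuity_2d_pt_inv dist1_sq); [|lra]; unfold dist1_sq; simpl.
    repeat (apply continuity_2d_pt_minus || apply continuity_2d_pt_plus
            || apply continuity_2d_pt_mult || apply continuity_2d_pt_id1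
            || apply continuity_2d_pt_id2 || apply continuity_2d_pt_const).
  - apply (continuity_2d_pt_inv one_minus_sq_norm); [|lra]; unfold one_minus_sq_norm; simpl.
    repeat (apply continuity_2d_pt_minus || apply continuity_2d_pt_plus
            || apply continuity_2d_pt_mult || apply continuity_2d_pt_id1
            || apply continuity_2d_pt_id2 || apply continuity_2d_pt_const).
  - exact (continuity_2d_pt_plus _ _ _ _ IHe1 IHe2).
  - exact (continuity_2d_pt_mult _ _ _ _ IHe1 IHe2).
  - induction n; simpl.
    + apply continuity_2d_pt_const.
    + exact (continuity_2d_pt_mult _ (fun u v => eval e u v ^ n) _ _ IHe IHn).
Qed.

Lemma dpartials_ext_disc (f g : R -> R -> R) :
  (forall x y, in_disc x y -> f x y = g x y) ->
  forall l x y, in_disc x y -> dpartials l f x y = dpartials l g x y.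
Proof.
  intros Hfg l; induction l as [|b l IH]; intros x y H; [exact (Hfg x y H)|].
  pose proof (locally_2d_in_disc x y H) as Hloc.
  destruct b; simpl; apply Derive_ext_loc.
  - generalize (locally_2d_1d_const_y _ x y Hloc); apply filter_imp; auto.
  - generalize (locally_2d_1d_const_x _ x y Hloc); apply filter_imp; auto.
Qed.

Lemma dpartials_eval e l x y : in_disc x y ->
  dpartials l (eval e) x y = eval (derivs l e) x y.
Proof.
  revert x y; induction l as [|b l IH]; intros x y H; [reflexivity|].
  pose proof (locally_2d_in_disc x y H) as Hloc.
  destruct b; simpl; apply is_derive_unique.
  - apply (is_derive_ext_loc (fun t => eval (derivs l e) t y)).
    + generalize (locally_2d_1d_const_y _ x y Hloc); apply filter_imp.
      intros t Ht; symmetry; exact (IH t y Ht).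
    + exact (is_derive_eval true _ x y H).
  - apply (is_derive_ext_loc (fun t => eval (derivs l e) x t)).
    + generalize (locally_2d_1d_const_x _ x y Hloc); apply filter_imp.
      intros t Ht; symmetry; exact (IH x t Ht).
    + exact (is_derive_eval false _ x y H).
Qed.

Lemma smooth_on_disc_eval e : smooth_on_disc (eval e).
Proof.
  intros l; split.
  - intros x y H b; pose proof (locally_2d_in_disc x y H) as Hloc.
    destruct b; simpl.
    + apply (ex_derive_ext_loc (fun t => eval (derivs l e) t y)).
      * generalize (locally_2d_1d_const_y _ x y Hloc); apply filter_imp.
        intros t Ht; symmetry; exact (dpartials_eval e l t y Ht).
      * eexists; exact (is_derive_eval true _ x y H).
    + apply (ex_derive_ext_loc (fun t => eval (derivs l e) x t)).
      * generalize (locally_2d_1d_const_x _ x y Hloc); apply filter_imp.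
        intros t Ht; symmetry; exact (dpartials_eval e l x t Ht).
      * eexists; exact (is_derive_eval false _ x y H).
  - intros x y H; apply (continuity_2d_pt_ext_loc (eval (derivs l e))).
    + generalize (locally_2d_in_disc x y H); apply locally_2d_impl, locally_2d_forall.
      intros u v Huv; symmetry; exact (dpartials_eval e l u v Huv).
    + exact (continuity_2d_pt_eval _ x y H).
Qed.

Lemma smooth_on_disc_ext (f g : R -> R -> R) :
  (forall x y, in_disc x y -> f x y = g x y) -> smooth_on_disc g -> smooth_on_disc f.
Proof.
  intros Hfg Hg l; destruct (Hg l) as [Hex Hcont]; split.
  - intros x y H b; pose proof (locally_2d_in_disc x y H) as Hloc.
    specialize (Hex x y H); destruct b; simpl.
    + apply (ex_derive_ext_loc (fun t => dpartials l g t y)); [|exact (Hex true)].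
      generalize (locally_2d_1d_const_y _ x y Hloc); apply filter_imp.
      intros t Ht; symmetry; exact (dpartials_ext_disc f g Hfg l t y Ht).
    + apply (ex_derive_ext_loc (fun t => dpartials l g x t)); [|exact (Hex false)].
      generalize (locally_2d_1d_const_x _ x y Hloc); apply filter_imp.
      intros t Ht; symmetry; exact (dpartials_ext_disc f g Hfg l x t Ht).
  - intros x y H; apply (continuity_2d_pt_ext_loc (dpartials l g)); [|exact (Hcont x y H)].
    generalize (locally_2d_in_disc x y H); apply locally_2d_impl, locally_2d_forall.
    intros u v Huv; symmetry; exact (dpartials_ext_disc f g Hfg l u v Huv).
Qed.

Lemma Delta_ext_disc (f g : R -> R -> R) x y :
  (forall x y, in_disc x y -> f x y = g x y) -> in_disc x y -> Defs.Delta f x y = Defs.Delta g x y.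
Proof.
  intros Hfg H; unfold Defs.Delta; rewrite !(dpartials_ext_disc f g Hfg _ x y H); reflexivity.
Qed.

Lemma Delta_eval e x y : in_disc x y ->
  Defs.Delta (eval e) x y
  = / 4 * (eval (deriv true (deriv true e)) x y + eval (deriv false (deriv false e)) x y).
Proof. intros H; unfold Defs.Delta; rewrite !dpartials_eval by exact H; reflexivity. Qed.

Definition one_minus_sq_norm_expr : expr :=
  EAdd (EC 1) (EMul (EC (-1)) (EAdd (EPow EX 2) (EPow EY 2))).

Definition H2_expr : expr :=
  let S := one_minus_sq_norm_expr in
  EAdd (EAdd (EAdd (EMul (EC (/ 2)) (EMul (EPow S 4) EInvD))
                   (EMul (EC (/ 2)) (EMul (EPow S 5) (EPow EInvD 2))))
             (EMul (EC (- / 4)) (EMul (EPow S 4) (EPow EInvD 2))))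
       (EMul (EC (/ 6)) (EMul (EPow S 6) (EPow EInvD 3))).

(* [Re (1 - z)^-4 = Re (1 - zbar)^4 / |1 - z|^8] *)
Definition re_inv_pow4_expr : expr :=
  let U := EAdd (EC 1) (EMul (EC (-1)) EX) in
  EMul (EAdd (EAdd (EPow U 4) (EMul (EC (-6)) (EMul (EPow U 2) (EPow EY 2)))) (EPow EY 4))
       (EPow EInvD 4).

Lemma H2_formula_eval x y : in_disc x y -> H2_formula x y = eval H2_expr x y.
Proof.
  intros H; pose proof (dist1_sq_pos x y H).
  unfold H2_formula; simpl; unfold dist1_sq in *; field; lra.
Qed.

Lemma Delta_H2_formula x y : in_disc x y ->
  Defs.Delta H2_formula x y = weight 2 x y * (3 / 2 - 3 * eval re_inv_pow4_expr x y).
Proof.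
  intros H; pose proof (dist1_sq_pos x y H).
  rewrite (Delta_ext_disc _ _ x y H2_formula_eval H), Delta_eval by exact H.
  unfold weight; simpl; unfold dist1_sq in *; field; lra.
Qed.

Lemma Delta_affine_re_inv_pow4 x y : in_disc x y ->
  Defs.Delta (fun a b => 3 / 2 - 3 * eval re_inv_pow4_expr a b) x y = 0.
Proof.
  intros H; pose proof (dist1_sq_pos x y H).
  rewrite (Delta_ext_disc _ (eval (EAdd (EC (3 / 2)) (EMul (EC (-3)) re_inv_pow4_expr))) x y);
    [|intros a b _; simpl; ring | exact H].
  rewrite Delta_eval by exact H.
  simpl; unfold dist1_sq in *; field; lra.
Qed.

Lemma H2_formula_pde x y : in_disc x y ->
  Defs.Delta (fun a b => / weight 2 a b * Defs.Delta H2_formula a b) x y = 0.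
Proof.
  intros H; rewrite <- (Delta_affine_re_inv_pow4 x y H).
  apply Delta_ext_disc; [|exact H]; intros a b Hab.
  rewrite Delta_H2_formula by exact Hab.
  pose proof (one_minus_sq_norm_pos a b Hab); unfold weight, one_minus_sq_norm in *.
  field; lra.
Qed.

Lemma smooth_on_disc_H2_formula : smooth_on_disc H2_formula.
Proof. exact (smooth_on_disc_ext _ _ H2_formula_eval (smooth_on_disc_eval H2_expr)). Qed.

Lemma ex_RInt_of_continuous (f : R -> R) a b : (forall t, continuous f t) -> ex_RInt f a b.
Proof. intros Hf; apply (ex_RInt_continuous (V := R_CompleteNormedModule)); intros t _; apply Hf. Qed.

Lemma at_left_1_unit_interval : at_left 1 (fun r => 0 < r < 1).
Proof.
  exists (mkposreal 1 Rlt_0_1); intros r Hr Hr1.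
  change (Rabs (r - 1) < 1) in Hr; apply Rabs_def2 in Hr; lra.
Qed.

Lemma filterlim_at_left_continuous (f : R -> R) x :
  continuous f x -> filterlim f (at_left x) (locally (f x)).
Proof. apply filterlim_filter_le_1, filter_le_within. Qed.

Lemma filterlim_Rmult {T : Type} {F : (T -> Prop) -> Prop} {FF : Filter F}
  (f g : T -> R) (a b : R) :
  filterlim f F (locally a) -> filterlim g F (locally b) ->
  filterlim (fun x => f x * g x) F (locally (a * b)).
Proof. intros Hf Hg; exact (filterlim_comp_2 f g Rmult Hf Hg (filterlim_mult a b)). Qed.

Lemma filterlim_Rplus {T : Type} {F : (T -> Prop) -> Prop} {FF : Filter F}
  (f g : T -> R) (a b : R) :
  filterlim f F (locally a) -> filterlim g F (locally b) ->
  filterlim (fun x => f x + g x) F (locally (a + b)).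
Proof. intros Hf Hg; exact (filterlim_comp_2 f g Rplus Hf Hg (filterlim_plus a b)). Qed.

Lemma filterlim_abs_le_0 {T : Type} {F : (T -> Prop) -> Prop} {FF : Filter F}
  (f g : T -> R) :
  F (fun x => Rabs (f x) <= g x) -> filterlim g F (locally 0) -> filterlim f F (locally 0).
Proof.
  intros Hfg Hg.
  apply (filterlim_le_le (fun x => - g x) f g (Finite 0)); [| |exact Hg].
  - revert Hfg; apply filter_imp; intros x Hx; apply Rabs_le_between, Hx.
  - rewrite <- Ropp_0; eapply filterlim_comp; [exact Hg | exact (filterlim_opp 0)].
Qed.

Definition circ_sq (r t : R) : R := 1 - 2 * r * cos t + r ^ 2.

Lemma circ_sq_eq r t : circ_sq r t = (1 - r) ^ 2 + 2 * r * (1 - cos t).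
Proof. unfold circ_sq; ring. Qed.

Lemma circ_sq_pos r t : 0 < r < 1 -> 0 < circ_sq r t.
Proof. intros H; rewrite circ_sq_eq; pose proof (COS_bound t); nra. Qed.

Definition poisson (r t : R) : R := (1 - r ^ 2) / circ_sq r t.

Lemma poisson_nonneg r t : 0 < r < 1 -> 0 <= poisson r t.
Proof.
  intros H; apply Rdiv_le_0_compat; [nra | exact (circ_sq_pos r t H)].
Qed.

Lemma continuous_poisson r t : 0 < r < 1 -> continuous (poisson r) t.
Proof.
  intros H; pose proof (circ_sq_pos r t H); apply (ex_derive_continuous (poisson r)).
  unfold poisson, circ_sq in *; auto_derive; lra.
Qed.

(* This primitive is smooth in [t] because [1 - r cos t > 0]. *)
Definition poisson_primitive (r t : R) : R :=
  t + 2 * atan (r * sin t / (1 - r * cos t)).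

Lemma is_derive_poisson_primitive r t : 0 < r < 1 ->
  is_derive (poisson_primitive r) t (poisson r t).
Proof.
  intros H; pose proof (circ_sq_pos r t H); pose proof (COS_bound t).
  assert (0 < 1 - r * cos t) by nra.
  pose proof (sin2_cos2 t) as E; unfold Rsqr in E.
  unfold poisson_primitive, poisson, circ_sq in *; auto_derive; [lra|].
  set (c := cos t) in *; set (s := sin t) in *; clearbody c s.
  field_simplify_eq; [simpl; nsatz | repeat split; intro Hz; nra].
Qed.

Lemma is_RInt_poisson r : 0 < r < 1 -> is_RInt (poisson r) 0 (2 * PI) (2 * PI).
Proof.
  intros H.
  replace (2 * PI) with (minus (poisson_primitive r (2 * PI)) (poisson_primitive r 0)) at 2.
  - apply (is_RInt_derive (V := R_CompleteNormedModule)); intros t _.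
    + exact (is_derive_poisson_primitive r t H).
    + exact (continuous_poisson r t H).
  - unfold minus, plus, opp, poisson_primitive; simpl.
    rewrite sin_2PI, cos_2PI, sin_0, cos_0, !Rmult_0_r, !Rdiv_0_l, atan_0; ring.
Qed.

Lemma cos_le_away d t : 0 < d <= PI -> d <= t <= 2 * PI - d -> cos t <= cos d.
Proof.
  intros Hd Ht; pose proof PI_RGT_0.
  destruct (Rle_lt_dec t PI).
  - destruct (Req_dec t d) as [->|]; [lra|].
    left; apply cos_decreasing_1; lra.
  - replace (cos t) with (cos (2 * PI - t))
      by (rewrite cos_minus, cos_2PI, sin_2PI; ring).
    destruct (Req_dec (2 * PI - t) d) as [->|]; [lra|].
    left; apply cos_decreasing_1; lra.
Qed.

Lemma cos_lt_1 d : 0 < d <= PI -> cos d < 1.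
Proof.
  intros Hd; pose proof PI_RGT_0; rewrite <- cos_0; apply cos_decreasing_1; lra.
Qed.

Lemma poisson_le_away r d t : / 2 <= r < 1 -> 0 < d <= PI -> d <= t <= 2 * PI - d ->
  poisson r t <= 2 * (1 - r) / (1 - cos d).
Proof.
  intros Hr Hd Ht.
  pose proof (cos_le_away d t Hd Ht); pose proof (cos_lt_1 d Hd).
  assert (Hc : 1 - cos d <= circ_sq r t) by (rewrite circ_sq_eq; nra).
  unfold poisson, Rdiv; apply Rmult_le_compat; [nra | | nra |].
  - left; apply Rinv_0_lt_compat; lra.
  - apply Rinv_le_contravar; lra.
Qed.

Definition H2_circle (r t : R) : R :=
  let s := 1 - r ^ 2 in let d := circ_sq r t in
  / 2 * s ^ 4 / d + / 2 * s ^ 5 / d ^ 2 - / 4 * s ^ 4 / d ^ 2 + / 6 * s ^ 6 / d ^ 3.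

Lemma restr_H2_formula r t : restr H2_formula r t = H2_circle r t.
Proof.
  assert (E : cos t ^ 2 + sin t ^ 2 = 1) by (rewrite <- (sin2_cos2 t); unfold Rsqr; ring).
  unfold restr, H2_formula, H2_circle, circ_sq.
  replace (1 - ((r * cos t) ^ 2 + (r * sin t) ^ 2))
    with (1 - r ^ 2 * (cos t ^ 2 + sin t ^ 2)) by ring.
  replace ((1 - r * cos t) ^ 2 + (r * sin t) ^ 2)
    with (1 - 2 * r * cos t + r ^ 2 * (cos t ^ 2 + sin t ^ 2)) by ring.
  rewrite E, !Rmult_1_r; reflexivity.
Qed.

Lemma continuous_H2_circle r t : 0 < r < 1 -> continuous (H2_circle r) t.
Proof.
  intros H; pose proof (circ_sq_pos r t H).
  apply (ex_derive_continuous (H2_circle r)).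
  unfold H2_circle, circ_sq in *; auto_derive; repeat split; apply Rgt_not_eq;
    repeat apply Rmult_lt_0_compat; lra.
Qed.

Lemma continuous_H2_circle_div r t : 0 < r < 1 ->
  continuous (fun u => H2_circle r u / (1 - r)) t.
Proof.
  intros H; apply (continuous_mult (H2_circle r) (fun _ => / (1 - r))).
  - exact (continuous_H2_circle r t H).
  - apply continuous_const.
Qed.

(* With [s = 1 - r^2] and [d = circ_sq r t], [H2_circle r t] is
   [s (s / d) (s^2 / 2 + s q / 2 - q / 4 + q^2 / 6)], where [s / d] is the
   Poisson kernel and [0 <= q = s^2 / d <= 4] because [d >= (1 - r)^2]. *)
Lemma abs_H2_circle_le r t : 0 < r < 1 -> Rabs (H2_circle r t) <= 7 * (1 - r ^ 2) * poisson r t.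
Proof.
  intros H; pose proof (circ_sq_pos r t H) as Hd.
  assert (Hd1 : (1 - r) ^ 2 <= circ_sq r t) by (rewrite circ_sq_eq; pose proof (COS_bound t); nra).
  unfold H2_circle, poisson; set (d := circ_sq r t) in *; set (s := 1 - r ^ 2).
  assert (Hs : 0 < s < 1) by (unfold s; nra).
  set (q := s ^ 2 / d).
  assert (Hq : 0 <= q <= 4).
  { unfold q; split; [apply Rdiv_le_0_compat; nra|].
    apply Rle_div_l; [lra|].
    replace (s ^ 2) with ((1 - r) ^ 2 * (1 + r) ^ 2) by (unfold s; ring).
    apply Rle_trans with ((1 - r) ^ 2 * 4); [apply Rmult_le_compat_l; nra | lra]. }
  replace (/ 2 * s ^ 4 / d + / 2 * s ^ 5 / d ^ 2 - / 4 * s ^ 4 / d ^ 2 + / 6 * s ^ 6 / d ^ 3)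
    with (s * (s / d) * (s ^ 2 / 2 + s * q / 2 - q / 4 + q ^ 2 / 6))
    by (unfold q; field; lra).
  assert (Hp : 0 <= s * (s / d)) by (apply Rmult_le_pos; [lra | apply Rdiv_le_0_compat; lra]).
  rewrite Rabs_mult, (Rabs_pos_eq _ Hp).
  replace (7 * s * (s / d)) with (s * (s / d) * 7) by ring.
  apply Rmult_le_compat_l; [exact Hp|].
  apply Rabs_le; split; nra.
Qed.

Lemma abs_H2_circle_div_le r t : 0 < r < 1 ->
  Rabs (H2_circle r t / (1 - r)) <= 14 * poisson r t.
Proof.
  intros H; pose proof (abs_H2_circle_le r t H); pose proof (poisson_nonneg r t H).
  rewrite Rabs_div by lra; rewrite (Rabs_pos_eq (1 - r)) by lra.
  apply Rle_div_l; [lra|].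
  replace (7 * (1 - r ^ 2) * poisson r t) with (7 * (1 + r) * (poisson r t * (1 - r))) in * by ring.
  assert (0 <= poisson r t * (1 - r)) by (apply Rmult_le_pos; lra).
  nra.
Qed.

Lemma is_derive_sin_div_circ_sq r t : 0 < r < 1 ->
  is_derive (fun u => sin u / circ_sq r u) t
    (- ((1 + r ^ 2) / (2 * r)) / circ_sq r t + (1 - r ^ 2) ^ 2 / (2 * r) / circ_sq r t ^ 2).
Proof.
  intros H; pose proof (circ_sq_pos r t H).
  pose proof (sin2_cos2 t) as E; unfold Rsqr in E.
  unfold circ_sq in *; auto_derive; [lra|].
  set (c := cos t) in *; set (s := sin t) in *; clearbody c s.
  field_simplify_eq; [simpl; nsatz | repeat split; intro Hz; nra].
Qed.

Lemma is_derive_sin_div_circ_sq_sqr r t : 0 < r < 1 ->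
  is_derive (fun u => sin u / circ_sq r u ^ 2) t
    (/ (2 * r) / circ_sq r t - 3 * (1 + r ^ 2) / (2 * r) / circ_sq r t ^ 2
     + (1 - r ^ 2) ^ 2 / r / circ_sq r t ^ 3).
Proof.
  intros H; pose proof (circ_sq_pos r t H).
  pose proof (sin2_cos2 t) as E; unfold Rsqr in E.
  unfold circ_sq in *; auto_derive; [apply Rgt_not_eq; apply Rmult_lt_0_compat; nra|].
  set (c := cos t) in *; set (s := sin t) in *; clearbody c s.
  field_simplify_eq; [simpl; nsatz | repeat split; intro Hz; nra].
Qed.

(* The mean of [H2_circle r] over the circle: with [s = 1 - r^2], [m = 1 + r^2],
   the means of [1 / circ_sq r t ^ k] for k = 1, 2, 3 are
   [1 / s], [m / s^3] and [(1 + 4 r^2 + r^4) / s^5]. *)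
Definition H2_circle_mean (r : R) : R :=
  let s := 1 - r ^ 2 in let m := 1 + r ^ 2 in
  s ^ 3 / 2 + s ^ 2 * m / 2 - s * m / 4 + s * (1 + 4 * r ^ 2 + r ^ 4) / 6.

(* The two [sin]-terms vanish at [0] and [2 pi]. *)
Definition H2_circle_primitive (r t : R) : R :=
  let s := 1 - r ^ 2 in let m := 1 + r ^ 2 in
  H2_circle_mean r * poisson_primitive r t
  + r * s ^ 2 * (s - / 2 + m / 2) * (sin t / circ_sq r t)
  + r * s ^ 4 / 6 * (sin t / circ_sq r t ^ 2).

Lemma is_derive_H2_circle_primitive r t : 0 < r < 1 ->
  is_derive (H2_circle_primitive r) t (H2_circle r t).
Proof.
  intros H; pose proof (circ_sq_pos r t H).
  pose proof (is_derive_plus _ _ _ _ _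
    (is_derive_plus _ _ _ _ _
       (is_derive_scal _ _ (H2_circle_mean r) _ (is_derive_poisson_primitive r t H))
       (is_derive_scal _ _ (r * (1 - r ^ 2) ^ 2 * (1 - r ^ 2 - / 2 + (1 + r ^ 2) / 2)) _
          (is_derive_sin_div_circ_sq r t H)))
    (is_derive_scal _ _ (r * (1 - r ^ 2) ^ 4 / 6) _ (is_derive_sin_div_circ_sq_sqr r t H)))
    as D.
  match type of D with is_derive _ _ ?l => replace (H2_circle r t) with l; [exact D|] end.
  unfold plus, scal; simpl; unfold mult; simpl.
  unfold H2_circle, H2_circle_mean, poisson; set (d := circ_sq r t) in *.
  field; lra.
Qed.

Lemma is_RInt_H2_circle r : 0 < r < 1 ->
  is_RInt (H2_circle r) 0 (2 * PI) (2 * PI * H2_circle_mean r).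
Proof.
  intros H.
  replace (2 * PI * H2_circle_mean r)
    with (minus (H2_circle_primitive r (2 * PI)) (H2_circle_primitive r 0)).
  - apply (is_RInt_derive (V := R_CompleteNormedModule)); intros t _.
    + exact (is_derive_H2_circle_primitive r t H).
    + exact (continuous_H2_circle r t H).
  - unfold minus, plus, opp, H2_circle_primitive, poisson_primitive; simpl.
    rewrite sin_2PI, cos_2PI, sin_0, cos_0, !Rmult_0_r, !Rdiv_0_l, atan_0; ring.
Qed.

Lemma RInt_H2_circle_div r : 0 < r < 1 ->
  RInt (fun t => H2_circle r t / (1 - r)) 0 (2 * PI) = 2 * PI * (H2_circle_mean r / (1 - r)).
Proof.
  intros H; apply is_RInt_unique.
  replace (2 * PI * (H2_circle_mean r / (1 - r)))
    with (scal (/ (1 - r)) (2 * PI * H2_circle_mean r))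
    by (unfold scal; simpl; unfold mult; simpl; field; lra).
  apply (is_RInt_ext (fun t => scal (/ (1 - r)) (H2_circle r t))).
  - intros t _; unfold scal; simpl; unfold mult; simpl; unfold Rdiv; ring.
  - exact (is_RInt_scal _ _ _ _ _ (is_RInt_H2_circle r H)).
Qed.

Lemma H2_circle_mean_div r : r <> 1 ->
  H2_circle_mean r / (1 - r)
  = 1 + (1 - r) * (- / 12 + 5 / 6 * r + / 4 * r ^ 2 - / 3 * r ^ 3 - / 6 * r ^ 4).
Proof. intros H; unfold H2_circle_mean; field; lra. Qed.

Lemma filterlim_H2_circle_mean_div :
  filterlim (fun r => H2_circle_mean r / (1 - r)) (at_left 1) (locally 1).
Proof.
  set (q := fun r => 1 + (1 - r) * (- / 12 + 5 / 6 * r + / 4 * r ^ 2 - / 3 * r ^ 3 - / 6 * r ^ 4)).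
  apply (filterlim_ext_loc q).
  - generalize at_left_1_unit_interval; apply filter_imp; intros r Hr.
    symmetry; apply H2_circle_mean_div; lra.
  - replace 1 with (q 1) at 2 by (unfold q; ring).
    apply filterlim_at_left_continuous, (ex_derive_continuous q).
    unfold q; auto_derive; exact I.
Qed.

Lemma small_near_ends (g : R -> R) e : 0 < e ->
  continuous g 0 -> continuous g (2 * PI) -> g 0 = 0 -> g (2 * PI) = 0 ->
  exists d, 0 < d <= PI /\
    forall t, 0 <= t < d \/ 2 * PI - d < t <= 2 * PI -> Rabs (g t) <= e.
Proof.
  intros He Hg0 Hg2 E0 E2; pose proof PI_RGT_0.
  destruct (Hg0 _ (locally_ball (g 0) (mkposreal e He))) as [d0 Hd0].
  destruct (Hg2 _ (locally_ball (g (2 * PI)) (mkposreal e He))) as [d2 Hd2].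
  exists (Rmin d0 (Rmin d2 PI)); split.
  - split; [repeat apply Rmin_glb_lt; try apply cond_pos; lra|].
    apply Rle_trans with (Rmin d2 PI); apply Rmin_r.
  - assert (Rmin d0 (Rmin d2 PI) <= d0) by apply Rmin_l.
    assert (Rmin d0 (Rmin d2 PI) <= d2)
      by (apply Rle_trans with (Rmin d2 PI); [apply Rmin_r | apply Rmin_l]).
    intros t [Ht|Ht]; left.
    + assert (B : ball (g 0) e (g t)) by (apply Hd0; change (Rabs (t - 0) < d0);
                                           rewrite Rabs_pos_eq; lra).
      rewrite E0 in B; change (Rabs (g t - 0) < e) in B; rewrite Rminus_0_r in B; exact B.
    + assert (B : ball (g (2 * PI)) e (g t)) by (apply Hd2; change (Rabs (t - 2 * PI) < d2);
                                                  rewrite Rabs_left1; lra).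
      rewrite E2 in B; change (Rabs (g t - 0) < e) in B; rewrite Rminus_0_r in B; exact B.
Qed.

Lemma ex_RInt_poisson_abs (g : R -> R) r : 0 < r < 1 -> (forall t, continuous g t) ->
  ex_RInt (fun t => poisson r t * Rabs (g t)) 0 (2 * PI).
Proof.
  intros Hr Hg; apply ex_RInt_of_continuous; intros t.
  exact (continuous_mult (poisson r) _ t (continuous_poisson r t Hr) (continuous_Rabs_comp g t (Hg t))).
Qed.

Lemma RInt_poisson_abs_nonneg (g : R -> R) r : 0 < r < 1 -> (forall t, continuous g t) ->
  0 <= RInt (fun t => poisson r t * Rabs (g t)) 0 (2 * PI).
Proof.
  intros Hr Hg; pose proof PI_RGT_0.
  apply RInt_ge_0; [lra | exact (ex_RInt_poisson_abs g r Hr Hg) |].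
  intros t _; apply Rmult_le_pos; [exact (poisson_nonneg r t Hr) | apply Rabs_pos].
Qed.

Lemma RInt_poisson_abs_le (g : R -> R) r d e B :
  / 2 <= r < 1 -> 0 < d <= PI -> (forall t, continuous g t) ->
  (forall t, 0 <= t <= 2 * PI -> Rabs (g t) <= B) ->
  (forall t, 0 <= t < d \/ 2 * PI - d < t <= 2 * PI -> Rabs (g t) <= e) ->
  RInt (fun t => poisson r t * Rabs (g t)) 0 (2 * PI)
  <= 2 * PI * (e + 2 * (1 - r) * B / (1 - cos d)).
Proof.
  intros Hr Hd Hg HB He; pose proof PI_RGT_0; pose proof (cos_lt_1 d Hd).
  assert (Hr' : 0 < r < 1) by lra.
  assert (He0 : 0 <= e) by (apply Rle_trans with (Rabs (g 0)); [apply Rabs_pos | apply He; lra]).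
  assert (HB0 : 0 <= B) by (apply Rle_trans with (Rabs (g 0)); [apply Rabs_pos | apply HB; lra]).
  set (eta := 2 * (1 - r) * B / (1 - cos d)).
  assert (Heta : 0 <= eta) by (apply Rdiv_le_0_compat; nra).
  assert (I : is_RInt (fun t => e * poisson r t + eta) 0 (2 * PI) (2 * PI * (e + eta))).
  { replace (2 * PI * (e + eta)) with (plus (scal e (2 * PI)) (scal (2 * PI - 0) eta))
      by (unfold plus, scal; simpl; unfold mult; simpl; ring).
    exact (is_RInt_plus _ _ _ _ _ _ (is_RInt_scal _ _ _ e _ (is_RInt_poisson r Hr'))
             (is_RInt_const 0 (2 * PI) eta)). }
  rewrite <- (is_RInt_unique _ _ _ _ I); apply RInt_le;
    [lra | exact (ex_RInt_poisson_abs g r Hr' Hg) | eexists; exact I |].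
  intros t Ht; pose proof (poisson_nonneg r t Hr'); pose proof (Rabs_pos (g t)).
  destruct (Rlt_le_dec t d); [|destruct (Rlt_le_dec (2 * PI - d) t)].
  - assert (Rabs (g t) <= e) by (apply He; lra); nra.
  - assert (Rabs (g t) <= e) by (apply He; lra); nra.
  - assert (Rabs (g t) <= B) by (apply HB; lra).
    assert (poisson r t <= 2 * (1 - r) / (1 - cos d)) by (apply poisson_le_away; lra).
    assert (poisson r t * Rabs (g t) <= eta).
    { apply Rle_trans with (2 * (1 - r) / (1 - cos d) * B);
        [apply Rmult_le_compat; lra | unfold eta; right; field; lra]. }
    nra.
Qed.

Lemma filterlim_RInt_poisson_abs (g : R -> R) :
  (forall t, continuous g t) -> g 0 = 0 -> g (2 * PI) = 0 ->
  filterlim (fun r => RInt (fun t => poisson r t * Rabs (g t)) 0 (2 * PI))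
    (at_left 1) (locally 0).
Proof.
  intros Hg E0 E2; pose proof PI_RGT_0.
  apply filterlim_locally; intros eps; pose proof (cond_pos eps) as Heps.
  destruct (small_near_ends g (eps / (4 * PI))) as (d & Hd & Hnear); auto.
  { apply Rdiv_lt_0_compat; lra. }
  destruct (continuity_ab_maj (fun t => Rabs (g t)) 0 (2 * PI)) as (tM & HM & _); [lra| |].
  { intros t _; apply continuity_pt_filterlim, continuous_Rabs_comp, Hg. }
  pose proof (Rabs_pos (g tM)); set (B := Rabs (g tM)) in *.
  pose proof (cos_lt_1 d Hd); set (c := 1 - cos d); assert (Hc : 0 < c) by (unfold c; lra).
  assert (HK : 0 < 8 * PI * (B + 1)) by (apply Rmult_lt_0_compat; lra).
  set (rho := Rmin (/ 2) (eps * c / (8 * PI * (B + 1)))).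
  assert (Hrho : 0 < rho).
  { apply Rmin_glb_lt; [lra|]; apply Rdiv_lt_0_compat; [apply Rmult_lt_0_compat|]; lra. }
  assert (Hrho2 : rho <= / 2) by apply Rmin_l.
  exists (mkposreal rho Hrho); intros r Hr Hr1.
  change (Rabs (r - 1) < rho) in Hr; apply Rabs_def2 in Hr.
  assert (Hr2 : / 2 <= r) by lra.
  assert (Hr3 : (1 - r) * (8 * PI * (B + 1)) < eps * c).
  { apply Rlt_le_trans with (rho * (8 * PI * (B + 1))); [apply Rmult_lt_compat_r; lra|].
    apply Rle_trans with (eps * c / (8 * PI * (B + 1)) * (8 * PI * (B + 1)));
      [apply Rmult_le_compat_r; [lra | apply Rmin_r] | right; field; lra]. }
  pose proof (RInt_poisson_abs_le g r d (eps / (4 * PI)) B (conj Hr2 Hr1) Hd Hg HM Hnear) as Hle.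
  fold c in Hle.
  change (Rabs (RInt (fun t => poisson r t * Rabs (g t)) 0 (2 * PI) - 0) < eps).
  rewrite Rminus_0_r, Rabs_pos_eq by (apply RInt_poisson_abs_nonneg; [lra | exact Hg]).
  apply (Rle_lt_trans _ _ _ Hle).
  replace (2 * PI * (eps / (4 * PI) + 2 * (1 - r) * B / c))
    with (eps / 2 + 4 * PI * (1 - r) * B / c) by (field; unfold c; lra).
  assert (4 * PI * (1 - r) * B / c < eps / 2); [|lra].
  apply Rlt_div_l; [unfold c; lra | nra].
Qed.

Section ApproximateIdentity.

Variable K : R -> R -> R.
Variable C : R.
Hypothesis K_continuous : forall r t, 0 < r < 1 -> continuous (K r) t.
Hypothesis K_le_poisson : forall r t, 0 < r < 1 -> Rabs (K r t) <= C * poisson r t.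
Hypothesis K_mean :
  filterlim (fun r => / (2 * PI) * RInt (K r) 0 (2 * PI)) (at_left 1) (locally 1).

Lemma abs_RInt_K_le (g : R -> R) r : 0 < r < 1 -> (forall t, continuous g t) ->
  Rabs (RInt (fun t => K r t * g t) 0 (2 * PI))
  <= C * RInt (fun t => poisson r t * Rabs (g t)) 0 (2 * PI).
Proof.
  intros Hr Hg; pose proof PI_RGT_0; pose proof (ex_RInt_poisson_abs g r Hr Hg) as Ip.
  eapply Rle_trans; [apply abs_RInt_le; [lra|]|].
  { apply ex_RInt_of_continuous; intros t.
    exact (continuous_mult (K r) g t (K_continuous r t Hr) (Hg t)). }
  change (C * ?I) with (scal C I).
  rewrite <- (RInt_scal (V := R_CompleteNormedModule) _ _ _ C Ip).
  apply RInt_le; [lra | | |].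
  - apply ex_RInt_of_continuous; intros t.
    apply (continuous_Rabs_comp (fun t => K r t * g t)).
    exact (continuous_mult (K r) g t (K_continuous r t Hr) (Hg t)).
  - apply (ex_RInt_scal (V := R_CompleteNormedModule)); exact Ip.
  - intros t _; unfold scal; simpl; unfold mult; simpl.
    rewrite Rabs_mult, <- Rmult_assoc.
    apply Rmult_le_compat_r; [apply Rabs_pos | exact (K_le_poisson r t Hr)].
Qed.

Lemma filterlim_RInt_K_vanishing (g : R -> R) :
  (forall t, continuous g t) -> g 0 = 0 -> g (2 * PI) = 0 ->
  filterlim (fun r => RInt (fun t => K r t * g t) 0 (2 * PI)) (at_left 1) (locally 0).
Proof.
  intros Hg E0 E2.
  apply (filterlim_abs_le_0 _ (fun r => C * RInt (fun t => poisson r t * Rabs (g t)) 0 (2 * PI))).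
  - generalize at_left_1_unit_interval; apply filter_imp; intros r Hr.
    exact (abs_RInt_K_le g r Hr Hg).
  - replace (locally 0) with (locally (C * 0)) by (rewrite Rmult_0_r; reflexivity).
    apply filterlim_Rmult; [apply filterlim_const | exact (filterlim_RInt_poisson_abs g Hg E0 E2)].
Qed.

Lemma filterlim_approx_identity (phi : R -> R) :
  (forall t, continuous phi t) -> phi (2 * PI) = phi 0 ->
  filterlim (fun r => / (2 * PI) * RInt (fun t => K r t * phi t) 0 (2 * PI))
    (at_left 1) (locally (phi 0)).
Proof.
  intros Hphi Hper.
  set (g := fun t => phi t - phi 0).
  assert (Hg : forall t, continuous g t).
  { intros t; apply (continuous_minus phi (fun _ => phi 0)); [apply Hphi | apply continuous_const]. }
  apply (filterlim_ext_loc (fun r => / (2 * PI) * RInt (fun t => K r t * g t) 0 (2 * PI)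
                                     + phi 0 * (/ (2 * PI) * RInt (K r) 0 (2 * PI)))).
  - generalize at_left_1_unit_interval; apply filter_imp; intros r Hr.
    assert (I1 : ex_RInt (fun t => K r t * g t) 0 (2 * PI)).
    { apply ex_RInt_of_continuous; intros t.
      exact (continuous_mult (K r) g t (K_continuous r t Hr) (Hg t)). }
    assert (I2 : ex_RInt (K r) 0 (2 * PI))
      by (apply ex_RInt_of_continuous; intros t; exact (K_continuous r t Hr)).
    assert (D : RInt (fun t => K r t * phi t) 0 (2 * PI)
                = RInt (fun t => K r t * g t) 0 (2 * PI) + phi 0 * RInt (K r) 0 (2 * PI)).
    { apply is_RInt_unique.
      apply (is_RInt_ext (fun t => plus (K r t * g t) (scal (phi 0) (K r t)))).
      - intros t _; unfold plus, scal, g; simpl; unfold mult; simpl; ring.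
      - exact (is_RInt_plus _ _ _ _ _ _ (RInt_correct _ _ _ I1)
                 (is_RInt_scal _ _ _ (phi 0) _ (RInt_correct _ _ _ I2))). }
    rewrite D; ring.
  - replace (locally (phi 0)) with (locally (/ (2 * PI) * 0 + phi 0 * 1)) by (f_equal; ring).
    apply filterlim_Rplus.
    + apply filterlim_Rmult; [apply filterlim_const|].
      apply filterlim_RInt_K_vanishing; [exact Hg | unfold g; ring | unfold g; rewrite Hper; ring].
    + apply filterlim_Rmult; [apply filterlim_const | exact K_mean].
Qed.

End ApproximateIdentity.

Lemma continuous_of_test_fun phi : test_fun phi -> forall t, continuous phi t.
Proof. intros [_ Hder] t; exact (ex_derive_continuous phi t (Hder 1%nat t)). Qed.

Lemma test_fun_period phi : test_fun phi -> phi (2 * PI) = phi 0.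
Proof. intros [Hper _]; rewrite <- (Hper 0); f_equal; ring. Qed.

Lemma normal_derivative_dirac1_H2_formula : normal_derivative_dirac1 H2_formula.
Proof.
  intros phi Hphi.
  apply (filterlim_ext (fun r => / (2 * PI) *
           RInt (fun t => H2_circle r t / (1 - r) * phi t) 0 (2 * PI))).
  - intros r; unfold pair_T; f_equal; apply RInt_ext; intros t _.
    rewrite restr_H2_formula, Rminus_0_r; reflexivity.
  - apply (filterlim_approx_identity _ 14).
    + exact continuous_H2_circle_div.
    + exact abs_H2_circle_div_le.
    + apply (filterlim_ext_loc (fun r => H2_circle_mean r / (1 - r)));
        [|exact filterlim_H2_circle_mean_div].
      generalize at_left_1_unit_interval; apply filter_imp; intros r Hr.
      rewrite RInt_H2_circle_div by exact Hr; field; pose proof PI_RGT_0; lra.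
    + exact (continuous_of_test_fun phi Hphi).
    + exact (test_fun_period phi Hphi).
Qed.

Lemma pair_T_scal (c : R) (g phi : R -> R) :
  ex_RInt (fun t => g t * phi t) 0 (2 * PI) ->
  pair_T (fun t => c * g t) phi = c * pair_T g phi.
Proof.
  intros Hg; unfold pair_T.
  rewrite <- Rmult_assoc, (Rmult_comm c), Rmult_assoc; f_equal.
  apply is_RInt_unique, (is_RInt_ext (fun t => scal c (g t * phi t))).
  - intros t _; unfold scal; simpl; unfold mult; simpl; ring.
  - exact (is_RInt_scal _ _ _ c _ (RInt_correct _ _ _ Hg)).
Qed.

Lemma boundary_zero_H2_formula : boundary_zero H2_formula.
Proof.
  intros phi Hphi.
  set (N := fun r => pair_T (fun t => (restr H2_formula r t - 0) / (1 - r)) phi).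
  apply (filterlim_ext_loc (fun r => (1 - r) * N r)).
  - generalize at_left_1_unit_interval; apply filter_imp; intros r Hr.
    unfold N; rewrite <- pair_T_scal.
    + unfold pair_T; f_equal; apply RInt_ext; intros t _.
      apply (f_equal (fun u => u * phi t)); field; lra.
    + apply ex_RInt_of_continuous; intros t.
      apply (continuous_ext (fun t => H2_circle r t / (1 - r) * phi t)).
      * intros u; rewrite restr_H2_formula, Rminus_0_r; reflexivity.
      * exact (continuous_mult _ phi t (continuous_H2_circle_div r t Hr)
                 (continuous_of_test_fun phi Hphi t)).
  - replace (locally 0) with (locally ((1 - 1) * phi 0)) by (f_equal; ring).
    apply filterlim_Rmult; [|exact (normal_derivative_dirac1_H2_formula phi Hphi)].
    apply filterlim_at_left_continuous, (ex_derive_continuous (fun r => 1 - r)).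
    auto_derive; exact I.
Qed.

Theorem theorem3p1 : is_poisson_kernel 2 H2_formula.
Proof.
  split; [exact smooth_on_disc_H2_formula|].
  split; [exact H2_formula_pde|].
  split; [exact boundary_zero_H2_formula | exact normal_derivative_dirac1_H2_formula].
Qed.
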